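(* Let $f:[0,1]\to\mathbb{R}$ with $f(0),f(1)\in\mathbb{Z}$, let $n\in\mathbb{N}_+$, $n\ge 2$, and let $\Phi_n:[0,1]\to\mathbb{R}$ satisfy \[ \Phi_n\left(\tfrac{2}{n}\right)-2\Phi_n\left(\tfrac{1}{n}\right)+\Phi_n(0)\ge\frac12\left(2\binom{n}{1}^{-1}+\binom{n}{2}^{-1}\right), \] \[ \Phi_n\left(\tfrac{k+2}{n}\right)-2\Phi_n\left(\tfrac{k+1}{n}\right)+\Phi_n\left(\tfrac{k}{n}\right)\ge\frac12\left(\binom{n}{k}^{-1}+2\binom{n}{k+1}^{-1}+\binom{n}{k+2}^{-1}\right),\quad k=1,\dots,n-3\ (\text{when } n\ge4), \] \[ \Phi_n(1)-2\Phi_n\left(\tfrac{n-1}{n}\right)+\Phi_n\left(\tfrac{n-2}{n}\right)\ge\frac12\left(\binom{n}{n-2}^{-1}+2\binom{n}{n-1}^{-1}\right). \] (a) If $f(x)-\Phi_n(x)$ is convex on $[0,1]$, then $\widehat{B}_n(f)$ is convex on $[0,1]$. (b) If $f(x)+\Phi_n(x)$ is concave on $[0,1]$, then $\widehat{B}_n(f)$ is concave on $[0,1]$.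
   Context: For $n\in\mathbb{N}_+$ and $f:[0,1]\to\mathbb{R}$, $\widehat{B}_n(f)(x):=\sum_{k=0}^n \left\langle f\left(\frac{k}{n}\right)\binom{n}{k}\right\rangle x^k(1-x)^{n-k}$, where $\langle\alpha\rangle$ is the integer nearest to $\alpha$ (when $\alpha$ is a half-integer, $\langle\alpha\rangle$ may be either neighbouring integer, chosen arbitrarily; the result holds for any such choice). *)

From HB Require Import structures.
From mathcomp Require Import all_boot all_order all_algebra.
From mathcomp Require Import reals.
Set Implicit Arguments. Unset Strict Implicit. Unset Printing Implicit Defensive.
Import Order.TTheory GRing.Theory Num.Theory.
Local Open Scope ring_scope.

(* m k is "a nearest integer" to a: |a - m| <= 1/2 (both neighbours allowed
   at half-integers). *)
Definition is_nearest_int (R : realType) (a : R) (m : int) : Prop :=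
  `|a - m%:~R| <= 2^-1.

(* The integer Bernstein operator, given the chosen roundings m k of
   f(k/n) * C(n,k), k = 0..n. *)
Definition Bhat (R : realType) (n : nat) (m : nat -> int) (x : R) : R :=
  \sum_(0 <= k < n.+1) (m k)%:~R * x ^+ k * (1 - x) ^+ (n - k).

Definition convex_on (R : realType) (a b : R) (g : R -> R) : Prop :=
  forall x y t : R, a <= x <= b -> a <= y <= b -> 0 <= t <= 1 ->
    g (t * x + (1 - t) * y) <= t * g x + (1 - t) * g y.

Definition concave_on (R : realType) (a b : R) (g : R -> R) : Prop :=
  forall x y t : R, a <= x <= b -> a <= y <= b -> 0 <= t <= 1 ->
    t * g x + (1 - t) * g y <= g (t * x + (1 - t) * y).

From HB Require Import structures.
From mathcomp Require Import all_boot all_order all_algebra.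
From mathcomp Require Import reals.
From mathcomp Require Import ring lra zify.
From mathcomp Require Import interval_inference boolp topology normedtype derive realfun convex.
Import Order.TTheory GRing.Theory Num.Theory.
Local Open Scope ring_scope.

(* With c k := m k / 'C(n, k), Bhat n m is the Bernstein polynomial of c; its
   second derivative is n (n - 1) times the Bernstein polynomial of degree n - 2
   of the second differences of c, and Bernstein polynomials with nonnegative
   coefficients are nonnegative on [0, 1].  So Bhat n m is convex as soon as the
   second differences of c are nonnegative.  Rounding moves c j away from
   f (j / n) by at most 1 / (2 'C(n, j)), and not at all for j = 0, n because
   f 0 and f 1 are integers.  The hypotheses on Phi say that its second
   differences on the grid k / n exceed the worst effect of rounding on a second
   difference, and convexity of f - Phi passes this bound on to f.  The concave
   case is the convex one applied to - f. *)

Section Bernstein.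
Variable R : comNzRingType.
Implicit Types c : nat -> R.

Definition fdiff c k := c k.+1 - c k.

Lemma fdiff2E c k : fdiff (fdiff c) k = c k.+2 - 2 * c k.+1 + c k.
Proof. rewrite /fdiff; ring. Qed.

Definition bernstein n c : {poly R} :=
  \sum_(k < n.+1) (c k * 'C(n, k)%:R) *: ('X^k * (1 - 'X) ^+ (n - k)).

Lemma bernstein0 c : bernstein 0 c = (c 0%N)%:P.
Proof. by rewrite /bernstein big_ord1 !expr0 !mulr1 alg_polyC. Qed.

Lemma bernsteinB n c d :
  bernstein n (fun k => c k - d k) = bernstein n c - bernstein n d.
Proof.
by rewrite /bernstein -sumrB; apply: eq_bigr => k _; rewrite mulrBl scalerBl.
Qed.

Lemma bernsteinS n c :
  bernstein n.+1 c = (1 - 'X) * bernstein n c + 'X * bernstein n (fun k => c k.+1).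
Proof.
rewrite /bernstein big_ord_recl /=.
under eq_bigr do rewrite /bump /= add1n binS natrD mulrDr scalerDl.
rewrite big_split /= addrA; congr (_ + _).
  rewrite [RHS]mulr_sumr [RHS]big_ord_recl [in LHS]big_ord_recr /=.
  rewrite (bin_small (ltnSn n)) mulr0 scale0r addr0 /bump /= !bin0 !subn0.
  rewrite -scalerAr mulrCA -exprS.
  congr (_ + _); apply: eq_bigr => k _.
  by rewrite /bump /= add1n -scalerAr mulrCA -exprS subSn.
rewrite mulr_sumr; apply: eq_bigr => k _.
by rewrite -scalerAr mulrA -exprS subSS.
Qed.

Lemma deriv_bernstein n c :
  (bernstein n.+1 c)^`() = n.+1%:R *: bernstein n (fdiff c).
Proof.
elim: n c => [|n IHn] c.
  by rewrite bernsteinS !bernstein0 !poly.derivE scale1r polyCB; ring.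
rewrite bernsteinS derivD !derivM !poly.derivE !IHn.
rewrite [n.+2%:R]mulrSr scalerDl scale1r {1}(bernsteinS n (fdiff c)) /fdiff.
rewrite !bernsteinB -!mul_polyC; ring.
Qed.

Lemma horner_bernstein n c x : (bernstein n c).[x] =
  \sum_(k < n.+1) c k * 'C(n, k)%:R * x ^+ k * (1 - x) ^+ (n - k).
Proof.
rewrite horner_sum; apply: eq_bigr => k _.
by rewrite hornerZ hornerM hornerXn horner_exp hornerD hornerN hornerX hornerC !mulrA.
Qed.

End Bernstein.
Arguments fdiff {R} c k.
Arguments bernstein {R} n c.

Lemma bernstein_ge0 (R : realFieldType) n (c : nat -> R) x :
  0 <= x <= 1 -> (forall k, (k <= n)%N -> 0 <= c k) -> 0 <= (bernstein n c).[x].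
Proof.
move=> /andP[x0 x1] c_ge0; rewrite horner_bernstein; apply: sumr_ge0 => k _.
by rewrite !mulr_ge0 ?exprn_ge0 ?subr_ge0 ?ler0n // c_ge0 // -ltnS.
Qed.

Lemma convex_on_horner (R : realType) (p : {poly R}) :
  (forall x, 0 < x < 1 -> 0 <= p^`()^`().[x]) -> convex_on 0 1 (horner p).
Proof.
move=> p''_ge0.
have D1p (q : {poly R}) : @derive R R^o R^o (horner q) ^~ 1 = horner q^`().
  by apply/funext => z; rewrite derivE derive1E.
have convex_ordered a b t : 0 <= a -> b <= 1 -> a <= b -> 0 <= t <= 1 ->
    p.[t * a + (1 - t) * b] <= t * p.[a] + (1 - t) * p.[b].
  move=> a0 b1 ab /andP[t0 t1].
  have := @second_derivative_convex R (horner p) a b _ _ _ _ _ (Itv01 t0 t1) ab.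
  rewrite !convRE /=; apply.
  - move=> z /andP[az zb]; rewrite D1p derive_val; apply: p''_ge0.
    by rewrite (le_lt_trans a0 az) (lt_le_trans zb b1).
  - exact/cvg_at_left_filter/continuous_horner.
  - exact/cvg_at_right_filter/continuous_horner.
  - by move=> z _; exact: derivable_horner.
  - by move=> z _; rewrite D1p; exact: derivable_horner.
move=> x y t /andP[x0 x1] /andP[y0 y1] /andP[t0 t1].
have [xy|yx] := leP x y; first by apply: convex_ordered; rewrite ?t0.
have := convex_ordered y x (1 - t) y0 x1 (ltW yx).
rewrite subr_ge0 t1 lerBlDr lerDl t0 => /(_ isT).
by rewrite subKr addrC [t * p.[x] + _]addrC.
Qed.

Lemma bernstein_convex (R : realType) n (c : nat -> R) :
  (forall k, (k.+2 <= n)%N -> 0 <= fdiff (fdiff c) k) ->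
  convex_on 0 1 (horner (bernstein n c)).
Proof.
move=> c''_ge0; apply: convex_on_horner => x /andP[x0 x1].
case: n c''_ge0 => [|[|n]] c''_ge0.
- by rewrite bernstein0 !poly.derivC horner0.
- by rewrite deriv_bernstein bernstein0 poly.derivZ poly.derivC scaler0 horner0.
rewrite !(deriv_bernstein, poly.derivZ) scalerA hornerZ mulr_ge0 ?ler0n //.
apply: bernstein_ge0 => [|k kn]; first by rewrite !ltW.
by apply: c''_ge0; rewrite !ltnS.
Qed.

Section Grid.
Context {R : realType}.

Lemma nearest_int_intr (z m : int) : is_nearest_int (z%:~R : R) m -> m = z.
Proof.
rewrite /is_nearest_int -intrB -intr_norm => zm_le.
have : `|z - m|%:~R < (1 : R) by apply: le_lt_trans zm_le _; rewrite invf_lt1 ?ltr1n.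
rewrite ltrz1; lia.
Qed.

Lemma is_nearest_intN (a : R) m : is_nearest_int a m -> is_nearest_int (- a) (- m).
Proof. by rewrite /is_nearest_int mulrNz -opprD normrN. Qed.

Lemma nearest_int_div_err (a b : R) m : 0 < b -> is_nearest_int (a * b) m ->
  `|m%:~R / b - a| <= 2^-1 * b^-1.
Proof.
rewrite /is_nearest_int => b_gt0 abm_le.
have -> : m%:~R / b - a = - ((a * b - m%:~R) / b) by field; rewrite gt_eqF.
by rewrite normrN normrM normfV (gtr0_norm b_gt0) ler_wpM2r // invr_ge0 ltW.
Qed.

Definition sample n (g : R -> R) k := g (k%:R / n%:R).

Definition round_err n j : R :=
  if (0 < j < n)%N then 2^-1 * 'C(n, j)%:R^-1 else 0.

Lemma round_err_le n j : round_err n j <= 2^-1 * 'C(n, j)%:R^-1.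
Proof. by rewrite /round_err; case: ifP => // _; rewrite mulr_ge0 ?invr_ge0. Qed.

Lemma round_errn n : round_err n n = 0.
Proof. by rewrite /round_err ltnn andbF. Qed.

Lemma sample_round_err f n m :
  (exists z : int, f 0 = z%:~R) -> (exists z : int, f 1 = z%:~R) -> (0 < n)%N ->
  (forall k, (k <= n)%N -> is_nearest_int (f (k%:R / n%:R) * 'C(n, k)%:R) (m k)) ->
  forall j, (j <= n)%N -> `|(m j)%:~R / 'C(n, j)%:R - sample n f j| <= round_err n j.
Proof.
move=> [z0 f0] [z1 f1] n_gt0 m_near j jn.
have C_gt0 : (0 : R) < 'C(n, j)%:R by rewrite ltr0n bin_gt0.
have no_err z : sample n f j = z%:~R -> `|(m j)%:~R / 'C(n, j)%:R - sample n f j| <= 0.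
  move=> fj; have := m_near j jn; rewrite -/(sample n f j) fj.
  rewrite [_%:R]pmulrn -intrM => /nearest_int_intr ->.
  by rewrite intrM -pmulrn mulfK ?subrr ?normr0 // gt_eqF.
rewrite /round_err; case: ifP => [_|]; first exact: nearest_int_div_err (m_near j jn).
have [j0 _|j_gt0 /=] := posnP j; first by apply: (no_err z0); rewrite /sample j0 mul0r.
rewrite ltn_neqAle jn andbT => /negbFE/eqP jE.
by apply: (no_err z1); rewrite /sample jE divff // pnatr_eq0 -lt0n.
Qed.

Lemma convex_onN (a b : R) (g : R -> R) :
  convex_on a b (fun x => - g x) <-> concave_on a b g.
Proof. by split=> gN_cvx x y t xab yab t01; have := gN_cvx x y t xab yab t01; lra. Qed.

Lemma convex_on_fdiff2_sample {g : R -> R} {n k : nat} :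
  convex_on 0 1 g -> (k.+2 <= n)%N -> 0 <= fdiff (fdiff (sample n g)) k.
Proof.
move=> g_cvx kn.
have n_gt0 : (0 : R) < n%:R by rewrite ltr0n (leq_trans _ kn).
have grid j : (j <= n)%N -> (0 <= (j%:R / n%:R : R)) && ((j%:R / n%:R : R) <= 1).
  by move=> jn; rewrite divr_ge0 ?ler0n //= ler_pdivrMr // mul1r ler_nat.
have mid : 2^-1 * (k%:R / n%:R) + (1 - 2^-1) * (k.+2%:R / n%:R) = k.+1%:R / n%:R :> R.
  by rewrite -[k.+2]addn2 -[k.+1]addn1 !natrD; field; rewrite gt_eqF.
have := g_cvx _ _ 2^-1 (grid k (ltnW (ltnW kn))) (grid _ kn).
rewrite mid invr_ge0 ler0n invf_le1 ?ler1n // => /(_ isT).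
by rewrite fdiff2E /sample; lra.
Qed.

Lemma concave_on_fdiff2_sample {g : R -> R} {n k : nat} :
  concave_on 0 1 g -> (k.+2 <= n)%N -> fdiff (fdiff (sample n g)) k <= 0.
Proof.
move=> /convex_onN /convex_on_fdiff2_sample gN_fdiff2 /gN_fdiff2.
by rewrite !fdiff2E /sample; lra.
Qed.

Lemma Bhat_bernstein n m :
  @Bhat R n m = horner (bernstein n (fun k => (m k)%:~R / 'C(n, k)%:R)).
Proof.
apply/funext => x; rewrite horner_bernstein /Bhat big_mkord.
apply: eq_bigr => k _; rewrite divfK // pnatr_eq0 -lt0n bin_gt0.
by rewrite -ltnS.
Qed.

Lemma BhatN n m (x : R) : Bhat n (fun k => - m k) x = - Bhat n m x.
Proof. by rewrite /Bhat -sumrN; apply: eq_bigr => k _; rewrite mulrNz !mulNr. Qed.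

Lemma Bhat_convex (f : R -> R) n m :
  (exists z : int, f 0 = z%:~R) -> (exists z : int, f 1 = z%:~R) -> (0 < n)%N ->
  (forall k, (k <= n)%N -> is_nearest_int (f (k%:R / n%:R) * 'C(n, k)%:R) (m k)) ->
  (forall k, (k.+2 <= n)%N ->
     round_err n k + 2 * round_err n k.+1 + round_err n k.+2 <=
       fdiff (fdiff (sample n f)) k) ->
  convex_on 0 1 (@Bhat R n m).
Proof.
move=> f0 f1 n_gt0 m_near f_fdiff2; rewrite Bhat_bernstein.
apply: bernstein_convex => k kn; rewrite fdiff2E.
have err := sample_round_err f n m f0 f1 n_gt0 m_near.
have := err _ kn; have := err _ (ltnW kn); have := err _ (ltnW (ltnW kn)).
have := f_fdiff2 k kn; rewrite fdiff2E !ler_norml.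
lra.
Qed.

End Grid.

Section PhiGrid.
Context {R : realType} {Phi : R -> R} {n : nat}.
Hypothesis Phi_first : Phi (2%:R / n%:R) - 2 * Phi (1 / n%:R) + Phi 0 >=
    2^-1 * (2 * ('C(n, 1))%:R^-1 + ('C(n, 2))%:R^-1).
Hypothesis Phi_mid : forall k : nat, (1 <= k)%N -> (k <= n - 3)%N ->
     Phi ((k.+2)%:R / n%:R) - 2 * Phi ((k.+1)%:R / n%:R) + Phi (k%:R / n%:R) >=
       2^-1 * (('C(n, k))%:R^-1 + 2 * ('C(n, k.+1))%:R^-1
               + ('C(n, k.+2))%:R^-1).
Hypothesis Phi_last :
  Phi 1 - 2 * Phi ((n - 1)%N%:R / n%:R) + Phi ((n - 2)%N%:R / n%:R) >=
    2^-1 * (('C(n, n - 2))%:R^-1 + 2 * ('C(n, n - 1))%:R^-1).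

Lemma round_err_le_fdiff2 k : (k.+2 <= n)%N ->
  round_err n k + 2 * round_err n k.+1 + round_err n k.+2 <=
    fdiff (fdiff (sample n Phi)) k.
Proof.
move=> kn; rewrite fdiff2E /sample.
have err_le j := @round_err_le R n j.
have [k0|k_gt0] := posnP k.
  move: Phi_first; rewrite k0 [round_err n 0]/round_err /= mulr0n mulr1n mul0r.
  by have := err_le 1%N; have := err_le 2%N; lra.
have [kn'|kn'] := eqVneq k.+2 n.
  subst n; move: Phi_last; rewrite divff ?pnatr_eq0 // round_errn !subSS !subn0.
  by have := err_le k; have := err_le k.+1; lra.
have k_le : (k <= n - 3)%N by move/eqP: kn'; lia.
have := Phi_mid k k_gt0 k_le.
by have := err_le k; have := err_le k.+1; have := err_le k.+2; lra.
Qed.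

End PhiGrid.

Theorem proposition3p3 (R : realType) (f Phi : R -> R) (n : nat) (m : nat -> int) :
  (exists z : int, f 0 = z%:~R) ->
  (exists z : int, f 1 = z%:~R) ->
  (2 <= n)%N ->
  (forall k : nat, (k <= n)%N ->
     is_nearest_int (f (k%:R / n%:R) * ('C(n, k))%:R) (m k)) ->
  Phi (2%:R / n%:R) - 2 * Phi (1 / n%:R) + Phi 0 >=
    2^-1 * (2 * ('C(n, 1))%:R^-1 + ('C(n, 2))%:R^-1) ->
  (forall k : nat, (1 <= k)%N -> (k <= n - 3)%N ->
     Phi ((k.+2)%:R / n%:R) - 2 * Phi ((k.+1)%:R / n%:R) + Phi (k%:R / n%:R) >=
       2^-1 * (('C(n, k))%:R^-1 + 2 * ('C(n, k.+1))%:R^-1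
               + ('C(n, k.+2))%:R^-1)) ->
  Phi 1 - 2 * Phi ((n - 1)%N%:R / n%:R) + Phi ((n - 2)%N%:R / n%:R) >=
    2^-1 * (('C(n, n - 2))%:R^-1 + 2 * ('C(n, n - 1))%:R^-1) ->
  (convex_on 0 1 (fun x => f x - Phi x) -> convex_on 0 1 (@Bhat R n m)) /\
  (concave_on 0 1 (fun x => f x + Phi x) -> concave_on 0 1 (@Bhat R n m)).
Proof.
move=> f0 f1 n_ge2 m_near Phi_first Phi_mid Phi_last.
have n_gt0 : (0 < n)%N by rewrite (leq_trans _ n_ge2).
have Phi_fdiff2 := round_err_le_fdiff2 Phi_first Phi_mid Phi_last.
split=> [f_cvx | f_ccv].
  apply: (Bhat_convex f n m f0 f1 n_gt0 m_near) => k kn.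
  have := convex_on_fdiff2_sample f_cvx kn; have := Phi_fdiff2 k kn.
  by rewrite !fdiff2E /sample /=; lra.
apply/convex_onN; under eq_fun do rewrite -BhatN.
apply: (Bhat_convex (fun x => - f x)) => // [||k kn|k kn].
- by case: f0 => z f0; exists (- z); rewrite f0 mulrNz.
- by case: f1 => z f1; exists (- z); rewrite f1 mulrNz.
- by rewrite mulNr; apply/is_nearest_intN/m_near.
have := concave_on_fdiff2_sample f_ccv kn; have := Phi_fdiff2 k kn.
by rewrite !fdiff2E /sample /=; lra.
Qed.
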